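(* Let $\mathbb{K}$ be a field and let $f\in\mathbb{K}[x]$ be a tame polynomial. Then the fixing group $\Gamma_\mathbb{K}(f)$ is cyclic.
   Context: A polynomial $f\in\mathbb{K}[x]$ is called tame if $\mathrm{char}\,\mathbb{K}$ does not divide $\deg f$ (in particular a tame polynomial is non-constant). For a non-constant rational function $f\in\mathbb{K}(x)$, its fixing group is $\Gamma_\mathbb{K}(f)=\{u=\frac{ax+b}{cx+d}: a,b,c,d\in\mathbb{K},\ ad-bc\neq 0,\ f\circ u=f\}$, where $\circ$ denotes composition $g\circ h=g(h(x))$; it is a group under composition (viewed as a subgroup of the group of Möbius transformations $PSL(2,\mathbb{K})$). *)

From HB Require Import structures.
From mathcomp Require Import all_boot all_order all_algebra.
From mathcomp Require Import fraction.
Set Implicit Arguments. Unset Strict Implicit. Unset Printing Implicit Defensive.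
Import GRing.Theory.
Local Open Scope ring_scope.

Definition ratf (K : fieldType) := {fraction {poly K}}.

Definition cst (K : fieldType) (c : K) : ratf K := tofrac (c%:P).

Definition xF (K : fieldType) : ratf K := tofrac ('X : {poly K}).

Definition pcomp (K : fieldType) (f : {poly K}) (r : ratf K) : ratf K :=
  (map_poly (@cst K) f).[r].

Definition mob_comp (K : fieldType) (a b c d : K) (r : ratf K) : ratf K :=
  (cst a * r + cst b) / (cst c * r + cst d).

Definition mob (K : fieldType) (a b c d : K) : ratf K := mob_comp a b c d (xF K).

Definition tame (K : fieldType) (f : {poly K}) : Prop :=
  (0 < (size f).-1)%N /\ forall p : nat, p \in [pchar K] -> ~~ (p %| (size f).-1)%N.

Definition in_fixing_group (K : fieldType) (f : {poly K}) (u : ratf K) : Prop :=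
  exists a b c d : K, a * d - b * c != 0 /\ u = mob a b c d /\ pcomp f u = tofrac f.

(* A Moebius map (a x + b)/(c x + d) fixing f must have c = 0: clearing denominators,
   f(P/Q) Q^(deg f) is the homogenisation of f, which at a root of Q reduces to
   lc(f) P^(deg f), and P, Q have no common root since ad - bc <> 0. An affine symmetry
   a x + b of f has a^(deg f) = 1 by comparing leading coefficients, and comparing the
   next coefficients (this is where deg f <> 0 in K is needed) shows it is the dilation
   of ratio a about the mean c of the roots of f. So Gamma(f) is isomorphic to a finite
   subgroup of K^*, which is cyclic. *)

From HB Require Import structures.
From mathcomp Require Import all_boot all_order all_algebra fraction ring.
From mathcomp Require Import cyclic.
From Stdlib Require Import Classical.
Set Implicit Arguments. Unset Strict Implicit. Unset Printing Implicit Defensive.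
Import GRing.Theory.
Local Open Scope ring_scope.

Section AffinePolynomials.
Variable K : fieldType.
Implicit Types (p : {poly K}) (a b c d : K).

Definition affp a c : {poly K} := a *: 'X + c%:P.

Lemma affpX : affp 1 0 = 'X.
Proof. by rewrite /affp scale1r addr0. Qed.

Lemma size_affp a c : a != 0 -> size (affp a c) = 2.
Proof. by move=> a0; rewrite /affp -mul_polyC size_MXaddC polyC_eq0 (negPf a0) size_polyC a0. Qed.

Lemma lead_coef_affp a c : a != 0 -> lead_coef (affp a c) = a.
Proof.
move=> a0; rewrite lead_coefE size_affp //= coefD coefZ coefX coefC /=.
by rewrite mulr1 addr0.
Qed.

Lemma affp_comp a c p : affp a c \Po p = a *: p + c%:P.
Proof. by rewrite /affp comp_polyD comp_polyZ comp_polyX comp_polyC. Qed.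

Lemma affp_compA a c b d : affp a c \Po affp b d = affp (a * b) (a * d + c).
Proof.
by rewrite affp_comp /affp scalerDr scalerA -[a *: d%:P]mul_polyC -polyCM polyCD addrA.
Qed.

Lemma mulr_affp p a c : p * affp a c = a *: (p * 'X) + p * c%:P.
Proof. by rewrite /affp mulrDr scalerAr. Qed.

Lemma size_affp_exp a c k : a != 0 -> size (affp a c ^+ k) = k.+1.
Proof.
move=> a0; have := size_exp (affp a c) k; rewrite size_affp // mul1n => sz.
by rewrite -[in RHS]sz prednK // lt0n size_poly_eq0 expf_neq0 // -size_poly_eq0 size_affp.
Qed.

Lemma coef_affp_exp a c k : a != 0 ->
  (affp a c ^+ k)`_k = a ^+ k /\ (affp a c ^+ k.+1)`_k = k.+1%:R * a ^+ k * c.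
Proof.
move=> a0; elim: k => [|k [IHtop IHsub]].
  by rewrite expr1 coef1 /affp coefD coefZ coefX coefC mulr0 add0r mulr1 mul1r.
have top : (affp a c ^+ k.+1)`_k.+1 = a ^+ k.+1.
  rewrite exprS mulrC mulr_affp coefD coefZ coefMX coefMC /= IHtop exprS.
  by rewrite nth_default ?size_affp_exp // mul0r addr0.
split=> //; rewrite [affp a c ^+ _]exprS mulrC mulr_affp coefD coefZ coefMX coefMC /=.
by rewrite IHsub top !exprS -[k.+2]addn1 natrD; ring.
Qed.

Lemma coef_comp_affp_subleading p a c n : a != 0 -> size p = n.+2 ->
  (p \Po affp a c)`_n = p`_n * a ^+ n + p`_n.+1 * (n.+1%:R * a ^+ n * c).
Proof.
move=> a0 sp; rewrite coef_comp_poly sp !big_ord_recr /= big1 ?add0r.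
  by rewrite (coef_affp_exp c n a0).1 (coef_affp_exp c n a0).2.
by move=> i _; rewrite (@nth_default _ 0 (affp a c ^+ i)) ?mulr0 // size_affp_exp.
Qed.

Definition dilp c a : {poly K} := affp a ((1 - a) * c).

Lemma dilp1 c : dilp c 1 = 'X.
Proof. by rewrite /dilp subrr mul0r affpX. Qed.

Lemma dilp_comp c a b : dilp c a \Po dilp c b = dilp c (a * b).
Proof. by rewrite /dilp affp_compA; congr affp; ring. Qed.

End AffinePolynomials.

Section AffineSymmetries.
Variables (K : fieldType) (f : {poly K}) (n : nat).
Hypotheses (size_f : size f = n.+2) (deg_neq0 : n.+1%:R != 0 :> K).

Lemma coef_deg_neq0 : f`_n.+1 != 0.
Proof. by rewrite -[n.+1]/(n.+2.-1) -size_f -lead_coefE lead_coef_eq0 -size_poly_eq0 size_f. Qed.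

(* The mean of the roots of f. *)
Definition center : K := - f`_n / (n.+1%:R * f`_n.+1).

Lemma affp_sym_scale a b : f \Po affp a b = f -> a != 0.
Proof.
apply: contra_eqN => /eqP ->; rewrite /affp scale0r add0r comp_polyCr.
by apply/eqP => E; have := size_polyC f.[b]; rewrite E size_f; case: (_ != 0).
Qed.

Lemma affp_sym_unity a b : f \Po affp a b = f -> a ^+ n.+1 = 1.
Proof.
move=> sym; have a0 := affp_sym_scale sym.
have := lead_coef_comp f (q := affp a b); rewrite size_affp // sym lead_coef_affp // size_f.
have lf : lead_coef f != 0 by rewrite lead_coef_eq0 -size_poly_eq0 size_f.
by move=> /(_ isT) /esym; rewrite -[RHS]mulr1 => /(mulfI lf).
Qed.

Lemma affp_sym_shift a b : f \Po affp a b = f -> b = (1 - a) * center.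
Proof.
move=> sym; have a0 := affp_sym_scale sym.
have an : a ^+ n * a = 1 by rewrite -exprSr (affp_sym_unity sym).
have := coef_comp_affp_subleading b a0 size_f; rewrite sym => coef_n.
have {}coef_n : f`_n * a = f`_n + f`_n.+1 * (n.+1%:R * b).
  rewrite [in LHS]coef_n mulrDl -mulrA an mulr1 [_ * a ^+ n * b]mulrAC.
  by rewrite -!mulrA an mulr1.
rewrite /center; apply: (mulIf (mulf_neq0 deg_neq0 coef_deg_neq0)).
rewrite -mulrA divfK ?mulf_neq0 ?coef_deg_neq0 //.
have -> : b * (n.+1%:R * f`_n.+1) = f`_n * a - f`_n by rewrite coef_n; ring.
ring.
Qed.
End AffineSymmetries.

Section RationalSubstitution.
Variable K : fieldType.
Implicit Types (f p P Q : {poly K}) (a b c d : K).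

Lemma cst_inj : injective (@cst K).
Proof. by move=> x y /eqP; rewrite /cst tofrac_eq => /eqP /polyC_inj. Qed.

Lemma pcomp_tofrac f p : pcomp f (tofrac p) = tofrac (f \Po p).
Proof. by rewrite /pcomp /comp_poly -horner_map -map_poly_comp. Qed.

Lemma mob_comp_affp_tofrac a b p : mob_comp a b 0 1 (tofrac p) = tofrac (affp a b \Po p).
Proof.
rewrite affp_comp /mob_comp /cst polyC0 polyC1 tofrac0 tofrac1 mul0r add0r divr1.
by rewrite tofracD -mul_polyC tofracM.
Qed.

Lemma mob_tofrac a b c d : mob a b c d = tofrac (affp a b) / tofrac (affp c d).
Proof. by rewrite /mob /mob_comp /xF /cst /affp -!tofracM -!tofracD !mul_polyC. Qed.

Lemma pcomp_divE f P Q : Q != 0 ->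
  pcomp f (tofrac P / tofrac Q) * tofrac (Q ^+ (size f).-1) =
  tofrac (\sum_(i < size f) f`_i *: (P ^+ i * Q ^+ ((size f).-1 - i))).
Proof.
move=> Q0; have tQ : tofrac Q != 0 by rewrite tofrac_eq0.
rewrite /pcomp horner_coef size_map_inj_poly ?/cst ?tofrac0 //; last exact: cst_inj.
rewrite mulr_suml rmorph_sum; apply: eq_bigr => i _.
rewrite coef_map_id0 ?/cst ?tofrac0 // -mul_polyC !rmorphM !rmorphXn /=.
have le_i : (i <= (size f).-1)%N by rewrite -ltnS (leq_trans (ltn_ord i)) // leqSpred.
rewrite -{1}(subnKC le_i) exprD expr_div_n -!mulrA; congr (_ * _).
by rewrite mulKf ?expf_neq0.
Qed.

Lemma horner_affp a c x : (affp a c).[x] = a * x + c.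
Proof. by rewrite /affp hornerD hornerZ hornerX hornerC. Qed.

Lemma fixing_mob_c_eq0 f a b c d : (1 < size f)%N -> a * d - b * c != 0 ->
  pcomp f (mob a b c d) = tofrac f -> c = 0.
Proof.
move=> f_gt1 det sym; apply: contra_neq_eq det => c0.
have Q0 : affp c d != 0 by rewrite -size_poly_eq0 size_affp.
have := pcomp_divE f (affp a b) Q0; rewrite -mob_tofrac sym -tofracM.
move=> /eqP; rewrite tofrac_eq => /eqP /(congr1 (horner^~ (- d / c))).
have Qx : (affp c d).[- d / c] = 0 by rewrite horner_affp; field.
have [n size_f] : exists n, size f = n.+2
  by exists (size f).-2; case: (size f) f_gt1 => [|[|m]].
rewrite size_f /= hornerM horner_exp Qx expr0n /= mulr0 horner_sum big_ord_recr /=.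
rewrite big1 => [|i _]; last first.
  by rewrite hornerZ hornerM !horner_exp Qx expr0n subn_eq0 leqNgt ltn_ord /= !mulr0.
rewrite add0r hornerZ hornerM !horner_exp Qx subnn !expr0 mulr1 => /esym/eqP.
rewrite mulf_eq0 (negPf (coef_deg_neq0 size_f)) expf_eq0 /= horner_affp => /eqP Px.
have -> : a * d - b * c = - c * (a * (- d / c) + b) by field.
by rewrite Px mulr0.
Qed.

Lemma mob_affine a b d : d != 0 -> mob a b 0 d = tofrac (affp (a / d) (b / d)).
Proof.
move=> d0; rewrite mob_tofrac {2}/affp scale0r add0r.
have -> : affp a b = affp (a / d) (b / d) * d%:P.
  by rewrite /affp mulrDl -polyCM divfK // mulrC mul_polyC scalerA [d * _]mulrC divfK.
by rewrite tofracM mulfK // tofrac_eq0 polyC_eq0.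
Qed.

Lemma fixing_group_affine f u : (1 < size f)%N -> in_fixing_group f u ->
  exists a b, u = tofrac (affp a b) /\ f \Po affp a b = f.
Proof.
move=> f_gt1 [a [b [c [d [det [-> sym]]]]]].
have c0 := fixing_mob_c_eq0 f_gt1 det sym; subst c.
have d0 : d != 0 by apply: contraNneq det => ->; rewrite !mulr0 subrr.
exists (a / d), (b / d); rewrite -mob_affine //; split=> //.
by apply/eqP; rewrite -tofrac_eq -pcomp_tofrac -mob_affine // sym.
Qed.

End RationalSubstitution.

Section FiniteMulGroups.
Variable K : fieldType.
Implicit Types (S : seq K) (P : K -> Prop).

Lemma prodrMl_seq (x : K) S : \prod_(y <- S) (x * y) = x ^+ size S * \prod_(y <- S) y.
Proof.
elim: S => [|y S IH]; first by rewrite !big_nil mulr1.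
by rewrite !big_cons IH exprS mulrACA.
Qed.

Lemma pred_unity_roots_enum P m : (0 < m)%N -> (forall x, P x -> x ^+ m = 1) ->
  exists S, uniq S /\ forall x, x \in S <-> P x.
Proof.
move=> m_gt0 rootP; apply: NNPP => no_enum.
have grow S : uniq S -> (forall x, x \in S -> P x) -> exists x, P x /\ x \notin S.
  move=> uS SP; apply: NNPP => full; apply: no_enum; exists S; split=> // x.
  split=> [/SP //|Px]; apply: contraT => xS; exfalso; exact: full (ex_intro _ x _).
have long k : exists S, [/\ uniq S, size S = k & forall x, x \in S -> P x].
  elim: k => [|k [S [uS sizeS SP]]]; first by exists [::].
  have [x [Px xS]] := grow S uS SP.
  exists (x :: S); split; rewrite /= ?xS ?sizeS // => y.
  by rewrite in_cons => /predU1P [->|/SP].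
have [S [uS sizeS SP]] := long m.+1.
suff : (size S <= m)%N by rewrite sizeS ltnn.
by apply: max_unity_roots m_gt0 _ uS; apply/allP => x /SP /rootP; rewrite unity_rootE => ->.
Qed.

Section MulClosedSeq.
Variable S : seq K.
Hypotheses (uniq_S : uniq S) (S1 : 1 \in S) (S0 : 0 \notin S).
Hypothesis mul_S : {in S &, forall x y, x * y \in S}.

(* Multiplication by x permutes S, so it fixes the product of S. *)
Lemma mul_closed_seq_exp_size x : x \in S -> x ^+ size S = 1.
Proof.
move=> xS; have x0 : x != 0 by apply: contraNneq S0 => <-.
have uniq_xS : uniq [seq x * y | y <- S] by rewrite map_inj_uniq //; exact: mulfI.
have sub_xS : {subset [seq x * y | y <- S] <= S}.
  by move=> _ /mapP [y yS ->]; exact: mul_S.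
have perm_xS : perm_eq [seq x * y | y <- S] S.
  have [_ eq_xS] := uniq_min_size uniq_xS sub_xS (eq_leq (esym (size_map _ S))).
  exact: uniq_perm.
have : \prod_(y <- [seq x * y | y <- S]) y = \prod_(y <- S) y by exact: perm_big.
rewrite big_map prodrMl_seq => /eqP.
rewrite -subr_eq0 -{2}[\prod_(y <- S) y]mul1r -mulrBl mulf_eq0 subr_eq0.
case/orP => [/eqP //|]; rewrite prodf_seq_eq0 => /hasP [y yS /= /eqP y0].
by move: S0; rewrite -y0 yS.
Qed.

Lemma mul_closed_seq_cyclic : exists2 z, z \in S & {in S, forall x, exists k, x = z ^+ k}.
Proof.
have S_gt0 : (0 < size S)%N by case: S S1.
have roots : all (size S).-unity_root S.
  by apply/allP => x xS; rewrite unity_rootE mul_closed_seq_exp_size.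
have /hasP [z zS prim_z] := has_prim_root S_gt0 roots uniq_S (leqnn _).
exists z => // x xS; have [i ->] := prim_rootP prim_z (mul_closed_seq_exp_size xS).
by exists i.
Qed.

End MulClosedSeq.
End FiniteMulGroups.

Lemma iter_mob_comp_dilp (K : fieldType) (c z : K) k :
  iter k (mob_comp z ((1 - z) * c) 0 1) (xF K) = tofrac (dilp c (z ^+ k)).
Proof.
elim: k => [|k IH]; first by rewrite /= dilp1.
by rewrite iterS IH mob_comp_affp_tofrac -/(dilp c z) dilp_comp exprS.
Qed.

Lemma tame_size (K : fieldType) (f : {poly K}) :
  tame f -> exists2 n, size f = n.+2 & n.+1%:R != 0 :> K.
Proof.
case=> deg_gt0 deg_pchar.
have [m size_f] : exists m, size f = m.+2 by exists (size f).-2; case: (size f) deg_gt0 => [|[]].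
exists m => //; apply/negP => deg0; have [p p_char] := natf0_pchar (ltn0Sn m) deg0.
by have := deg_pchar p p_char; rewrite size_f (dvdn_pcharf p_char) deg0.
Qed.

Section TameFixingGroup.
Variables (K : fieldType) (f : {poly K}) (n : nat).
Hypotheses (size_f : size f = n.+2) (deg_neq0 : n.+1%:R != 0 :> K).

Definition fixing_dilation a := f \Po dilp (center f n) a = f.

Lemma fixing_group_dilation u : in_fixing_group f u ->
  exists2 a, fixing_dilation a & u = tofrac (dilp (center f n) a).
Proof.
move=> /fixing_group_affine [|a [b [-> sym]]]; first by rewrite size_f.
by exists a; rewrite /fixing_dilation /dilp -(affp_sym_shift size_f deg_neq0 sym).
Qed.

Lemma fixing_dilation_unity a : fixing_dilation a -> a ^+ n.+1 = 1.
Proof. exact: affp_sym_unity. Qed.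

Lemma fixing_dilation_neq0 a : fixing_dilation a -> a != 0.
Proof.
move=> /fixing_dilation_unity an; apply: contra_eq_neq an => ->.
by rewrite expr0n /= eq_sym oner_neq0.
Qed.

Lemma fixing_dilation_cyclic :
  exists2 z, fixing_dilation z & forall a, fixing_dilation a -> exists k, a = z ^+ k.
Proof.
have [S [uniq_S memS]] := pred_unity_roots_enum (ltn0Sn n) fixing_dilation_unity.
have S1 : 1 \in S by apply/memS; rewrite /fixing_dilation dilp1 comp_polyXr.
have S0 : 0 \notin S.
  by apply/negP => /memS /fixing_dilation_neq0; rewrite eqxx.
have mul_S : {in S &, forall x y, x * y \in S}.
  move=> x y /memS fix_x /memS fix_y; apply/memS.
  by rewrite /fixing_dilation -dilp_comp comp_polyA fix_x fix_y.
have [z /memS fix_z gen] := mul_closed_seq_cyclic uniq_S S1 S0 mul_S.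
by exists z => // a /memS /gen.
Qed.

End TameFixingGroup.

Theorem mainTheorem1 (K : fieldType) (f : {poly K}) :
  tame f ->
  exists a b c d : K,
    a * d - b * c != 0 /\ in_fixing_group f (mob a b c d) /\
    forall u : ratf K, in_fixing_group f u ->
      exists k : nat,
        u = iter k (mob_comp a b c d) (xF K) \/
        iter k (mob_comp a b c d) u = xF K.
Proof.
move=> /tame_size [n size_f deg_neq0].
have [z fix_z gen] := fixing_dilation_cyclic size_f.
have mob_z : mob z ((1 - z) * center f n) 0 1 = tofrac (dilp (center f n) z).
  by rewrite /mob /xF mob_comp_affp_tofrac comp_polyXr.
have det : z * 1 - (1 - z) * center f n * 0 != 0.
  by rewrite mulr0 subr0 mulr1; exact: (fixing_dilation_neq0 size_f fix_z).
exists z, ((1 - z) * center f n), 0, 1; split=> //; split.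
  by exists z, ((1 - z) * center f n), 0, 1; rewrite mob_z pcomp_tofrac fix_z.
move=> u /(fixing_group_dilation size_f deg_neq0) [a /gen [k ->] ->].
by exists k; left; rewrite iter_mob_comp_dilp.
Qed.
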